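(* Let $V$ be a finite set and let $G$ be the group with presentation $\langle V \mid r_e,\ e\in E\rangle$, where $E$ is a finite index set and each relator has the form $r_e=\lambda_e p_e\lambda_e^{-1}q_e^{-1}$ with $\lambda_e,p_e,q_e\in V$. Assume the vertex link $L$ (defined in the context) has girth at least $4$ (no loops, no multiple edges, no triangles), and that the descending link $L^+$ and the ascending link $L^-$ are trees. Then for any pair of distinct letters $a,b\in V$, the vertex rim $\mathrm{vrim}(a,b)$ of the fan $\mathrm{Fan}(a,b)$ is a freely reduced word in the letters $V^{\pm1}$, and the edge rim $\mathrm{erim}(a,b)$ is a freely reduced word in the letters $\{x_e\}_{e\in E}^{\pm1}$.
   Context: Let $P$ be the presentation $2$-complex: one vertex, one oriented loop per generator, and for each relator $r_e$ one unit square glued along the word $r_e$. In the square of $r_e$, starting at the corner $B$ and reading $\lambda_e p_e\lambda_e^{-1}q_e^{-1}$, the edges are: $\lambda_e$ from $B$ to a corner $Q$, $p_e$ from $Q$ to a corner $T$, $\lambda_e$ from a corner $R$ to $T$, and $q_e$ from $B$ to $R$. Call $T$ the top corner (its two incoming edges, labeled $p_e$ and $\lambda_e$, are the top edges) and $B$ the bottom corner. The vertex link $L$ is the graph with vertex set $\{v^+,v^-: v\in V\}$ and, for each relator $e$, four edges: $\{p_e^+,\lambda_e^+\}$ (corner $T$), $\{\lambda_e^-,q_e^-\}$ (corner $B$), $\{\lambda_e^+,p_e^-\}$ (corner $Q$), $\{q_e^+,\lambda_e^-\}$ (corner $R$). The descending link $L^+$ is the full subgraph on $\{v^+\}$ and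 the ascending link $L^-$ the full subgraph on $\{v^-\}$. For $e\in E$ put $x_e=q_e^{-1}\lambda_e$ (a formal letter, also an element of $G$). Fan $\mathrm{Fan}(a,b)$ for distinct $a,b\in V$: let $a^+=v_0^+,v_1^+,\dots,v_k^+=b^+$ be the unique simple path in the tree $L^+$. For $1\le i\le k$ let $C_i$ be a copy of the square of the unique relator whose top edges are labeled $v_{i-1}$ and $v_i$. $\mathrm{Fan}(a,b)$ is obtained by identifying, for $1\le i<k$, the top edge of $C_i$ labeled $v_i$ with the top edge of $C_{i+1}$ labeled $v_i$. For each $i$, the bottom boundary path of $C_i$ from the initial vertex of its top edge labeled $v_{i-1}$ to the initial vertex of its top edge labeled $v_i$ reads a two-letter word, which is either $q_e^{-1}\lambda_e$ or $\lambda_e^{-1}q_e$ for the relator $e$ of $C_i$. The vertex rim $\mathrm{vrim}(a,b)$ is the concatenation of these two-letter words for $i=1,\dots,k$, and the edge rim $\mathrm{erim}(a,b)$ is the word obtained by replacing each $q_e^{-1}\lambda_e$ by $x_e$ and each $\lambda_e^{-1}q_e$ by $x_e^{-1}$. *)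

From mathcomp Require Import all_boot.
Set Implicit Arguments. Unset Strict Implicit. Unset Printing Implicit Defensive.

Section Link.
Variables (V E : finType) (lam p q : E -> V).

(* Vertices of the link L: (v, true) = v^+, (v, false) = v^-. *)
Definition lvert := (V * bool)%type.

(* The four edges of L contributed by relator e, indexed by 'I_4:
   0: {p_e^+, lam_e^+} (corner T)   1: {lam_e^-, q_e^-} (corner B)
   2: {lam_e^+, p_e^-} (corner Q)   3: {q_e^+, lam_e^-} (corner R) *)
Definition linkEdge (f : E * 'I_4) : lvert * lvert :=
  let e := f.1 in
  match val f.2 with
  | 0 => ((p e, true), (lam e, true))
  | 1 => ((lam e, false), (q e, false))
  | 2 => ((lam e, true), (p e, false))
  | _ => ((q e, true), (lam e, false))
  end.

Definition same_ends (x y : lvert * lvert) : bool :=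
  ((x.1 == y.1) && (x.2 == y.2)) || ((x.1 == y.2) && (x.2 == y.1)).

Definition linkAdj (x y : lvert) : bool :=
  [exists f : E * 'I_4, same_ends (linkEdge f) (x, y)].

Definition link_girth_ge4 : Prop :=
  [/\ (forall f, (linkEdge f).1 != (linkEdge f).2),
      (forall f g, same_ends (linkEdge f) (linkEdge g) -> f = g) &
      (forall x y z, linkAdj x y -> linkAdj y z -> linkAdj z x -> False)].

Definition Lplus_adj : rel V := fun u v => linkAdj (u, true) (v, true).
Definition Lminus_adj : rel V := fun u v => linkAdj (u, false) (v, false).

Definition top_labels (e : E) (u v : V) : bool :=
  ((p e == u) && (lam e == v)) || ((lam e == u) && (p e == v)).

(* Data of Fan(a,b): vs = [v_1; ...; v_k] so that a :: vs is the simple path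
   a = v_0, ..., v_k = b in L^+, and es = [e_1; ...; e_k] where C_i is a copy
   of the square of relator e_i, whose top edges are labelled v_{i-1}, v_i. *)
Definition fan_steps (a : V) (vs : seq V) (es : seq E) : seq ((V * V) * E) :=
  zip (zip (a :: vs) vs) es.

Definition is_fan_data (a b : V) (vs : seq V) (es : seq E) : Prop :=
  [/\ last a vs = b, uniq (a :: vs), path Lplus_adj a vs,
      size es = size vs &
      all (fun t => top_labels t.2 t.1.1 t.1.2) (fan_steps a vs es)].

(* letters x^{+1} = (x, true), x^{-1} = (x, false) *)
(* bottom boundary word of C_i from the initial vertex of the top edge
   labelled v_{i-1} to that of the top edge labelled v_i:
   q_e^{-1} lam_e if v_{i-1} = lam_e (and v_i = p_e),
   lam_e^{-1} q_e if v_{i-1} = p_e (and v_i = lam_e). *)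
Definition vrim_piece (t : (V * V) * E) : seq (V * bool) :=
  let e := t.2 in
  if t.1.1 == lam e then [:: (q e, false); (lam e, true)]
  else [:: (lam e, false); (q e, true)].

Definition erim_piece (t : (V * V) * E) : E * bool :=
  let e := t.2 in (e, t.1.1 == lam e).

Definition vrim (a : V) (vs : seq V) (es : seq E) : seq (V * bool) :=
  flatten (map vrim_piece (fan_steps a vs es)).

Definition erim (a : V) (vs : seq V) (es : seq E) : seq (E * bool) :=
  map erim_piece (fan_steps a vs es).

End Link.

Definition is_tree (T : finType) (adj : rel T) : Prop :=
  (forall u v, connect adj u v) /\
  (forall c : seq T, 3 <= size c -> uniq c -> ~~ cycle adj c).

Definition not_inverse (T : eqType) (x y : T * bool) : bool :=
  (x.1 != y.1) || (x.2 == y.2).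

Definition freely_reduced (T : eqType) (w : seq (T * bool)) : bool :=
  match w with
  | [::] => true
  | x :: w' => path (@not_inverse T) x w'
  end.

From mathcomp Require Import all_boot.

Set Implicit Arguments. Unset Strict Implicit. Unset Printing Implicit Defensive.

(* A rim can only fail to be reduced at the junction of two consecutive squares
   C_i, C_(i+1), whose top edges share the label v_i.  For the edge rim, a
   cancellation x_e x_e^-1 makes both squares come from one relator e, so
   {p_e, lam_e} = {v_(i-1), v_i} = {v_i, v_(i+1)} and v_(i-1) = v_(i+1), against
   the simplicity of the path in L^+.  For the vertex rim, a cancellation either
   identifies two distinct corners of the two squares as one edge of L, or again
   leads to v_(i-1) = v_(i+1); inside a square, q_e^-1 lam_e is reduced because
   corner B is not a loop.  So only the simplicity of the path and the absence of
   loops and multiple edges in L are needed. *)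

Lemma freely_reducedE (T : eqType) (w : seq (T * bool)) :
  freely_reduced w = sorted (@not_inverse T) w.
Proof. by case: w. Qed.

Lemma sorted_flatten_pairs (S T : Type) (P : {pred S}) (R : rel S) (r : rel T)
    (f g : S -> T) :
    {in P, forall t, r (f t) (g t)} ->
    {in P &, forall t t', R t t' -> r (g t) (f t')} ->
  forall s, all P s -> sorted R s -> sorted r (flatten [seq [:: f t; g t] | t <- s]).
Proof.
move=> rfg rgf [|t s] //= /andP[Pt Ps] Rs; rewrite rfg //=.
elim: s t Pt Ps Rs => [|t' s IH] t Pt //= /andP[Pt' Ps] /andP[Rtt' Rs].
by rewrite rgf //= rfg //= IH.
Qed.

Section Fan.
Variables (V E : finType) (lam p q : E -> V).

Definition fan_adjacent (t t' : (V * V) * E) : bool :=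
  (t.1.2 == t'.1.1) && (t.1.1 != t'.1.2).

Definition labelled_step (t : (V * V) * E) : bool := top_labels lam p t.2 t.1.1 t.1.2.

Lemma fan_steps_sorted (a : V) (vs : seq V) (es : seq E) :
  uniq (a :: vs) -> sorted fan_adjacent (fan_steps a vs es).
Proof.
elim: vs a es => [|v vs IH] a [|e es] //= /andP[a_vs uniq_vs].
have := IH v es uniq_vs; rewrite /fan_steps /=.
case: vs es a_vs {IH} uniq_vs => [|w vs] [|e' es] //= a_wvs _ ->.
move: a_wvs; rewrite !inE !negb_or => /and3P[_ a_w _].
by rewrite /fan_adjacent /= eqxx a_w.
Qed.

Lemma top_labels_shared (e : E) (u v w : V) :
  top_labels lam p e u v -> top_labels lam p e v w -> u = w.
Proof.
by case/orP=> /andP[/eqP <- /eqP <-]; case/orP=> /andP[/eqP pv /eqP lw];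
  rewrite -?pv -?lw.
Qed.

Lemma erim_junction :
  {in labelled_step &, {homo erim_piece lam : t t' / fan_adjacent t t' >->
                                              not_inverse t t'}}.
Proof.
move=> [[u v] e] [[v' w] e']; rewrite /labelled_step unfold_in /= => lab lab'.
case/andP=> /= /eqP vv' uw; rewrite /not_inverse /=; case: eqVneq => //= ee'; subst v' e'.
by move: uw; rewrite (top_labels_shared lab lab') eqxx.
Qed.

Definition vrim_first (t : (V * V) * E) : V * bool :=
  if t.1.1 == lam t.2 then (q t.2, false) else (lam t.2, false).

Definition vrim_last (t : (V * V) * E) : V * bool :=
  if t.1.1 == lam t.2 then (lam t.2, true) else (q t.2, true).

Lemma vrim_pieceE (t : (V * V) * E) : vrim_piece lam q t = [:: vrim_first t; vrim_last t].
Proof. by rewrite /vrim_piece /vrim_first /vrim_last; case: ifP. Qed.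

Hypothesis link_loopless : forall f, (linkEdge lam p q f).1 != (linkEdge lam p q f).2.
Hypothesis link_simple :
  forall f g, same_ends (linkEdge lam p q f) (linkEdge lam p q g) -> f = g.

Lemma p_neq_lam (e : E) : p e != lam e.
Proof. by have := link_loopless (e, @Ordinal 4 0 isT); rewrite /= xpair_eqE andbT. Qed.

Lemma lam_neq_q (e : E) : lam e != q e.
Proof. by have := link_loopless (e, @Ordinal 4 1 isT); rewrite /= xpair_eqE andbT. Qed.

Lemma vrim_inner (t : (V * V) * E) : not_inverse (vrim_first t) (vrim_last t).
Proof.
rewrite /vrim_first /vrim_last /not_inverse.
by case: ifP => _ /=; rewrite orbF ?lam_neq_q // eq_sym lam_neq_q.
Qed.

Lemma distinct_corners (e e' : E) (i j : 'I_4) : i != j ->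
  ~~ same_ends (linkEdge lam p q (e, i)) (linkEdge lam p q (e', j)).
Proof. by move=> ij; apply/negP=> /link_simple [_ eq_ij]; rewrite eq_ij eqxx in ij. Qed.

Lemma vrim_junction :
  {in labelled_step &, forall t t', fan_adjacent t t' ->
                         not_inverse (vrim_last t) (vrim_first t')}.
Proof.
move=> [[u v] e] [[v' w] e']; rewrite /labelled_step !unfold_in /=.
move=> + + /andP[/= /eqP vv' uw]; subst v'; rewrite /vrim_last /vrim_first /not_inverse /=.
case/orP=> /andP[/eqP eu /eqP ev]; case/orP=> /andP[/eqP e'v /eqP e'w].
- (* corner R of e would be corner Q of e' *)
  rewrite -eu -e'v !ifN_eq ?p_neq_lam //= orbF.
  apply: contraNneq (@distinct_corners e e' (@Ordinal 4 3 isT) (@Ordinal 4 2 isT) isT).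
  by move=> qe; rewrite /same_ends /= qe ev e'v !eqxx.
- rewrite -eu (ifN_eq _ _ (p_neq_lam e)) -e'v eqxx /= orbF.
  apply: contraNneq uw => qe.
  have [ee'] : (e, @Ordinal 4 1 isT) = (e', @Ordinal 4 1 isT).
    by apply: link_simple; rewrite /same_ends /= qe ev e'v !eqxx.
  by rewrite -eu -e'w ee'.
- rewrite -eu eqxx -e'v (ifN_eq _ _ (p_neq_lam e')) /=.
  by rewrite eu e'w uw.
- (* corner Q of e would be corner R of e' *)
  rewrite -eu -e'v !eqxx /= orbF.
  apply: contraNneq (@distinct_corners e e' (@Ordinal 4 2 isT) (@Ordinal 4 3 isT) isT).
  by move=> qe; rewrite /same_ends /= qe ev e'v !eqxx.
Qed.

End Fan.

Theorem mainTheorem2 (V E : finType) (lam p q : E -> V) :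
  link_girth_ge4 lam p q ->
  is_tree (Lplus_adj lam p q) ->
  is_tree (Lminus_adj lam p q) ->
  forall a b : V, a != b ->
  forall (vs : seq V) (es : seq E),
    is_fan_data lam p q a b vs es ->
    freely_reduced (vrim lam q a vs es) /\ freely_reduced (erim lam a vs es).
Proof.
move=> [loopless simple _] _ _ a b _ vs es [_ uniq_avs _ _ labelled].
have adjacent := fan_steps_sorted es uniq_avs.
rewrite !freely_reducedE; split.
- rewrite /vrim (eq_map (vrim_pieceE lam q)).
  apply: sorted_flatten_pairs labelled adjacent.
  + by move=> t _; apply: vrim_inner.
  + exact: vrim_junction.
- exact: homo_sorted_in (@erim_junction V E lam p) labelled adjacent.
Qed.
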